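(* If $D=(E;\Phi)$ is a binary delta-matroid and $a,b\in E$ are distinct, then $D'_{ab}$ is a binary delta-matroid.
   Context: A set system $(E;\Phi)$: finite $E$, nonempty $\Phi\subseteq2^E$. Twist: $D*E'=(E;\{\phi\Delta E'\mid\phi\in\Phi\})$. A framed graph is a simple graph with framing $f:V\to\{0,1\}$; its $\mathbb{F}_2$-adjacency matrix has diagonal entries $f(v)$; its nondegeneracy delta-matroid has ground set $V$ and feasible sets those $U$ whose induced adjacency matrix is nondegenerate over $\mathbb{F}_2$ (empty set included). A binary delta-matroid is a set system isomorphic to a twist of the nondegeneracy delta-matroid of a framed graph. Sliding $a$ over $b$ ($a\neq b$): $\widetilde D_{ab}=(E;\Phi\,\Delta\,\{\phi\sqcup\{a\}\mid\phi\subseteq E\setminus\{a,b\},\ \phi\sqcup\{b\}\in\Phi\})$. Exchanging the ends of $a$ and $b$: $D'_{ab}=\big(\widetilde{(D*\{b\})}_{ab}\big)*\{b\}$. *)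

From HB Require Import structures.
From mathcomp Require Import all_boot all_order all_algebra.
Set Implicit Arguments. Unset Strict Implicit. Unset Printing Implicit Defensive.
Import GRing.Theory.
Local Open Scope ring_scope.

(* A set system (E; Phi): E a finite type (ground set), Phi : {set {set E}}
   (nonemptiness is part of being a set system; it holds automatically for
   binary delta-matroids since they contain a twist of the empty set). *)

Definition symdiff (T : finType) (A B : {set T}) : {set T} :=
  (A :\: B) :|: (B :\: A).

Definition twist (E : finType) (Phi : {set {set E}}) (E' : {set E}) :
  {set {set E}} := [set symdiff phi E' | phi in Phi].

Definition induced_adj (V : finType) (adj : rel V) (fr : V -> bool)
  (U : {set V}) : 'M['F_2]_#|U| :=
  \matrix_(i < #|U|, j < #|U|)
    (let x := enum_val i in let y := enum_val j in
     if x == y then (fr x)%:R else (adj x y)%:R).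

Definition nondeg_feasible (V : finType) (adj : rel V) (fr : V -> bool) :
  {set {set V}} := [set U : {set V} | \det (induced_adj adj fr U) != 0].

Definition binary_dm (E : finType) (Phi : {set {set E}}) : Prop :=
  exists (V : finType) (adj : rel V) (fr : V -> bool) (X : {set V})
         (g : V -> E),
    [/\ symmetric adj, irreflexive adj, bijective g &
        Phi = [set g @: S | S : {set V} in twist (nondeg_feasible adj fr) X]].

Definition slide (E : finType) (Phi : {set {set E}}) (a b : E) :
  {set {set E}} :=
  symdiff Phi
    [set phi :|: [set a] | phi in
       [set phi : {set E} | (phi \subset ~: [set a; b]) &&
                            (phi :|: [set b] \in Phi)]].

Definition exchange_ends (E : finType) (Phi : {set {set E}}) (a b : E) :
  {set {set E}} :=
  twist (slide (twist Phi [set b]) a b) [set b].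

From mathcomp Require Import all_boot all_order all_algebra.
Set Implicit Arguments. Unset Strict Implicit. Unset Printing Implicit Defensive.
Import GRing.Theory.
Local Open Scope ring_scope.

(* Encode a framed graph by its symmetric F_2-matrix K, so that a
   binary delta-matroid is a relabelled twist of the nondegeneracy set system
   of K.  If no feasible set avoids both a and b, exchanging the ends of a and
   b changes nothing.  Otherwise, twisting by such a feasible set commutes with
   the exchange and produces a binary delta-matroid containing the empty set;
   by principal pivoting (Tucker), it is the nondegeneracy set system of a
   symmetric matrix L.  Exchanging the ends of a and b then amounts to toggling
   the entries L_ab = L_ba: expanding along rows a and b gives, over F_2,
   det (L + E_ab + E_ba)[U] = det L[U] + det L[U - {a,b}] for a, b in U, the
   two cross cofactors cancelling by symmetry. *)

Lemma in_symdiff (T : finType) (A B : {set T}) x :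
  (x \in symdiff A B) = (x \in A) (+) (x \in B).
Proof. by rewrite !inE; case: (x \in A); case: (x \in B). Qed.

Section SetSystems.
Variable T : finType.
Implicit Types (Phi : {set {set T}}) (A B S X Y : {set T}) (a b : T).

Lemma symdiffK X : cancel (fun A => symdiff A X) (fun A => symdiff A X).
Proof. by move=> A; apply/setP => x; rewrite !in_symdiff -addbA addbb addbF. Qed.

Lemma mem_twist Phi X S : (S \in twist Phi X) = (symdiff S X \in Phi).
Proof.
apply/imsetP/idP => [[A PhiA ->]|PhiSX]; first by rewrite symdiffK.
by exists (symdiff S X); rewrite ?symdiffK.
Qed.

Lemma twistK X : cancel (fun Phi => twist Phi X) (fun Phi => twist Phi X).
Proof. by move=> Phi; apply/setP => S; rewrite !mem_twist symdiffK. Qed.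

Lemma mem_twist_set0 Phi X : (set0 \in twist Phi X) = (X \in Phi).
Proof. by rewrite mem_twist; congr (_ \in Phi); apply/setP => x; rewrite in_symdiff inE. Qed.

Lemma twist_twist Phi X Y : twist (twist Phi X) Y = twist Phi (symdiff Y X).
Proof.
apply/setP => S; rewrite !mem_twist; congr (_ \in Phi).
by apply/setP => x; rewrite !in_symdiff addbA.
Qed.

Lemma twist_set0 Phi : twist Phi set0 = Phi.
Proof.
by apply/setP => S; rewrite mem_twist; congr (_ \in Phi); apply/setP => x; rewrite in_symdiff inE addbF.
Qed.

Lemma mem_slid_sets Phi a b S : a != b ->
  (S \in [set A :|: [set a] | A in
     [set A : {set T} | (A \subset ~: [set a; b]) && (A :|: [set b] \in Phi)]]) =
  [&& a \in S, b \notin S & (S :\ a) :|: [set b] \in Phi].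
Proof.
move=> neq_ab; apply/imsetP/and3P => [[A] | [aS bS PhiS]].
  rewrite inE => /andP[/subsetP subA PhiA] ->.
  have [aA bA] : a \notin A /\ b \notin A.
    by split; apply/negP => /subA; rewrite !inE eqxx ?orbT.
  rewrite !inE eqxx orbT (negPf bA) eq_sym (negPf neq_ab); split => //.
  suff -> : (A :|: [set a]) :\ a = A by [].
  by apply/setP => x; rewrite !inE; case: (x =P a) => [->|]; rewrite ?(negPf aA) ?orbF.
exists (S :\ a); last by rewrite setUC setD1K.
rewrite inE PhiS andbT; apply/subsetP => x; rewrite !inE negb_or.
by case: (x =P a) => [->|] //=; case: (x =P b) => [->|] //=; rewrite (negPf bS).
Qed.

Lemma mem_exchange_ends Phi a b S : a != b ->
  (S \in exchange_ends Phi a b) =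
  (S \in Phi) (+) [&& a \in S, b \in S & S :\: [set a; b] \in Phi].
Proof.
move=> neq_ab; rewrite /exchange_ends mem_twist /slide in_symdiff mem_twist.
rewrite symdiffK mem_slid_sets // mem_twist !in_symdiff !inE (negPf neq_ab) /= addbF.
case bS: (b \in S); rewrite /= ?eqxx /= ?andbF ?addbF //.
congr (_ (+) (_ && (_ \in Phi))); apply/setP => x; rewrite !(in_symdiff, inE).
by case: (x \in S); case: (x == a); case: (x == b).
Qed.

Lemma exchange_ends_twist Phi X a b : a != b -> a \notin X -> b \notin X ->
  exchange_ends (twist Phi X) a b = twist (exchange_ends Phi a b) X.
Proof.
move=> neq_ab aX bX; apply/setP => S.
rewrite mem_exchange_ends // [in RHS]mem_twist mem_exchange_ends // !mem_twist.
rewrite !in_symdiff (negPf aX) (negPf bX) !addbF.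
congr (_ (+) (_ && (_ && (_ \in Phi)))); apply/setP => x; rewrite !(in_symdiff, inE).
case: (x =P a) => [->|]; first by rewrite (negPf aX).
by case: (x =P b) => [->|]; rewrite ?(negPf bX) // addbF.
Qed.

Lemma exchange_ends_id Phi a b : a != b ->
  (forall S, S \in Phi -> (a \in S) || (b \in S)) -> exchange_ends Phi a b = Phi.
Proof.
move=> neq_ab meet_ab; apply/setP => S; rewrite mem_exchange_ends //.
case: and3P => [[aS bS /meet_ab]|]; last by rewrite addbF.
by rewrite !inE !eqxx ?orbT.
Qed.
End SetSystems.

Definition relabel (T1 T2 : finType) (g : T1 -> T2) (Phi : {set {set T1}}) :
  {set {set T2}} := [set g @: S | S : {set T1} in Phi].

Lemma mem_imset_can (aT rT : finType) (f : aT -> rT) (f' : rT -> aT) (A : {set aT}) x :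
  cancel f f' -> cancel f' f -> (x \in f @: A) = (f' x \in A).
Proof. by move=> fK f'K; rewrite -{1}(f'K x) (mem_imset _ _ (can_inj fK)). Qed.

Section Relabel.
Variables (T1 T2 : finType) (g : T1 -> T2) (h : T2 -> T1).
Hypotheses (gK : cancel g h) (hK : cancel h g).
Implicit Types (Phi : {set {set T1}}) (S Y : {set T2}).

Lemma mem_relabel Phi S : (S \in relabel g Phi) = (h @: S \in Phi).
Proof.
apply/imsetP/idP => [[A PhiA ->]|PhiS]; first by rewrite -imset_comp (eq_imset _ gK) imset_id.
by exists (h @: S) => //; rewrite -imset_comp (eq_imset _ hK) imset_id.
Qed.

Lemma twist_relabel Phi Y : twist (relabel g Phi) Y = relabel g (twist Phi (h @: Y)).
Proof.
apply/setP => S; rewrite mem_twist !mem_relabel mem_twist; congr (_ \in Phi).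
by apply/setP => x; rewrite in_symdiff !(mem_imset_can _ _ hK gK) in_symdiff.
Qed.

Lemma exchange_ends_relabel Phi a b : a != b ->
  exchange_ends (relabel g Phi) (g a) (g b) = relabel g (exchange_ends Phi a b).
Proof.
move=> neq_ab; have neq_gab : g a != g b by rewrite (can_eq gK).
apply/setP => S; rewrite mem_exchange_ends // !mem_relabel mem_exchange_ends //.
rewrite [a \in _](mem_imset_can _ _ hK gK) [b \in _](mem_imset_can _ _ hK gK).
congr (_ (+) (_ && (_ && (_ \in Phi)))).
by apply/setP => x; rewrite !(inE, mem_imset_can _ _ hK gK) !(can_eq gK).
Qed.
End Relabel.

Section Nondegeneracy.
Variables (F : fieldType) (V : finType).
Implicit Types (K : V -> V -> F) (U : {set V}) (x y : {ffun V -> F}) (a b : V).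

Definition psubmx K U : 'M[F]_#|U| := \matrix_(i, j) K (enum_val i) (enum_val j).

Definition nondeg K : {set {set V}} := [set U : {set V} | \det (psubmx K U) != 0].

Lemma mem_nondeg K U : (U \in nondeg K) = (\det (psubmx K U) != 0).
Proof. by rewrite inE. Qed.

Lemma nondeg_ext K1 K2 : (forall w u, K1 w u = K2 w u) -> nondeg K1 = nondeg K2.
Proof.
move=> K12; apply/setP => U; rewrite !mem_nondeg.
suff -> : psubmx K1 U = psubmx K2 U by [].
by apply/matrixP => i j; rewrite !mxE K12.
Qed.

Definition vmul K x : {ffun V -> F} := [ffun w => \sum_z x z * K z w].

Definition null_on U x y := forall w, (if w \in U then y else x) w = 0.

Definition ker_trivial K U := forall x, null_on U x (vmul K x) -> x = 0.

Lemma vmulD K x y : vmul K (x + y) = vmul K x + vmul K y.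
Proof.
apply/ffunP => w; rewrite !ffunE -big_split.
by apply: eq_bigr => z _; rewrite !ffunE mulrDl.
Qed.

Lemma vmul_sym K x y : (forall z w, K z w = K w z) ->
  \sum_w x w * vmul K y w = \sum_w y w * vmul K x w.
Proof.
move=> K_sym; under eq_bigr do rewrite ffunE big_distrr.
rewrite exchange_big; apply: eq_bigr => z _; rewrite ffunE big_distrr.
by apply: eq_bigr => w _ /=; rewrite K_sym mulrCA.
Qed.

Lemma vmul0 K : vmul K 0 = 0.
Proof. by apply/ffunP => w; rewrite !ffunE big1 // => z _; rewrite ffunE mul0r. Qed.

Lemma vmul_supp K U x u : (forall w, w \notin U -> x w = 0) ->
  vmul K x u = \sum_(i < #|U|) x (enum_val i) * K (enum_val i) u.
Proof.
move=> xU; rewrite ffunE -(big_enum_val (fun z => x z * K z u)) /=.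
rewrite [RHS]big_mkcond /=; apply: eq_bigr => z _.
by case: ifPn => // /xU ->; rewrite mul0r.
Qed.

Lemma nondegP K U : reflect (ker_trivial K U) (U \in nondeg K).
Proof.
rewrite inE; apply: (iffP idP) => [detK x xU | kerK].
  have x_out w : w \notin U -> x w = 0 by move=> wU; have := xU w; rewrite (negPf wU).
  apply/ffunP => w; rewrite ffunE; apply/eqP; apply: contraNT detK => xw0.
  have wU : w \in U by apply: contraNT xw0 => /x_out ->.
  apply/det0P; exists (\row_i x (enum_val i)).
    apply/eqP => /rowP /(_ (enum_rank_in wU w)); rewrite !mxE enum_rankK_in //.
    by move/eqP; rewrite (negPf xw0).
  apply/rowP => j; rewrite !mxE; have := xU (enum_val j); rewrite enum_valP.
  rewrite (vmul_supp K _ x_out) => sum0; rewrite -[RHS]sum0.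
  by apply: eq_bigr => i _; rewrite !mxE.
apply/det0P => -[v /negP v_neq0 vK0]; apply: v_neq0.
pose x := [ffun w => \sum_(i < #|U| | enum_val i == w) v 0 i].
have x_enum i : x (enum_val i) = v 0 i.
  by rewrite ffunE (big_pred1 i) // => k /=; apply: (inj_eq enum_val_inj).
have x_out w : w \notin U -> x w = 0.
  move=> wU; rewrite ffunE big_pred0 // => i; apply/negP => /eqP iw.
  by move: wU; rewrite -iw enum_valP.
have xU : null_on U x (vmul K x).
  move=> w; case: ifPn => [wU | /x_out //].
  have := vK0; move/rowP/(_ (enum_rank_in wU w)); rewrite !mxE => sum0.
  rewrite (vmul_supp K _ x_out) -[RHS]sum0; apply: eq_bigr => i _.
  by rewrite x_enum !mxE enum_rankK_in.
have x0 := kerK x xU.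
by apply/eqP/rowP => i; rewrite -x_enum x0 !mxE ffunE.
Qed.

Lemma enum_val_lift_neq U a (aU : a \in U) k :
  enum_val (lift (enum_rank_in aU a) k) != a.
Proof.
apply: contra (neq_lift (enum_rank_in aU a) k) => /eqP lift_a; apply/eqP.
by apply: enum_val_inj; rewrite lift_a enum_rankK_in.
Qed.

Lemma det_psubmx_rowD K K1 K2 U a : a \in U ->
  (forall u, K a u = K1 a u + K2 a u) ->
  (forall w u, w != a -> K1 w u = K w u) ->
  (forall w u, w != a -> K2 w u = K w u) ->
  \det (psubmx K U) = \det (psubmx K1 U) + \det (psubmx K2 U).
Proof.
move=> aU rowa K1E K2E.
rewrite (@determinant_multilinear _ _ _ (psubmx K1 U) (psubmx K2 U) (enum_rank_in aU a) 1 1).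
- by rewrite !mul1r.
- by apply/rowP => j; rewrite !mxE enum_rankK_in // !mul1r.
- by apply/matrixP => k l; rewrite !mxE K1E // enum_val_lift_neq.
- by apply/matrixP => k l; rewrite !mxE K2E // enum_val_lift_neq.
Qed.

Definition delta_row K a b : V -> V -> F :=
  fun w u => if w == a then (u == b)%:R else K w u.

Lemma det_psubmx_delta_row K U a b (aU : a \in U) (bU : b \in U) :
  \det (psubmx (delta_row K a b) U) =
  cofactor (psubmx K U) (enum_rank_in aU a) (enum_rank_in bU b).
Proof.
rewrite (expand_det_row _ (enum_rank_in aU a)) (bigD1 (enum_rank_in bU b)) //=.
rewrite big1 => [|j jb]; rewrite !mxE /delta_row enum_rankK_in // eqxx.
  rewrite enum_rankK_in // eqxx mul1r addr0; congr (_ * \det _).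
  by apply/matrixP => k l; rewrite !mxE /delta_row (negPf (enum_val_lift_neq _ _)).
suff /negPf-> : enum_val j != b by rewrite mul0r.
by apply: contra jb => /eqP jb; apply/eqP; apply: enum_val_inj; rewrite jb enum_rankK_in.
Qed.

Lemma vmul_delta_rows K a b x u : a != b ->
  vmul (delta_row (delta_row K a b) b a) x u =
  x a * (u == b)%:R + x b * (u == a)%:R +
  vmul K [ffun w => if w \in [set a; b] then 0 else x w] u.
Proof.
move=> neq_ab; rewrite !ffunE (bigD1 a) //= (bigD1 b) 1?eq_sym //=.
rewrite [in RHS](bigD1 a) //= [in RHS](bigD1 b) 1?eq_sym //=.
rewrite /delta_row !ffunE !inE !eqxx (negPf neq_ab) orbT /= !mul0r !add0r addrA.
congr (_ + _); apply: eq_bigr => w /andP[wb wa].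
by rewrite ffunE !inE (negPf wa) (negPf wb).
Qed.

Lemma nondeg_delta_rows K U a b : a != b -> a \in U -> b \in U ->
  (U \in nondeg (delta_row (delta_row K a b) b a)) = (U :\: [set a; b] \in nondeg K).
Proof.
move=> neq_ab aU bU; have neq_ba : b != a by rewrite eq_sym.
have inUab w : (w \in U :\: [set a; b]) = [&& w != a, w != b & w \in U].
  by rewrite !inE negb_or andbA.
apply/nondegP/nondegP => [kerK4 x xU | kerK x xU].
  have [xa xb] : x a = 0 /\ x b = 0.
    by split; [have := xU a | have := xU b]; rewrite inUab eqxx ?andbF.
  (* z extends x at a and b so that z K' = x K off {a, b} and vanishes at a, b. *)
  pose z := [ffun w => if w == a then - vmul K x b
                       else if w == b then - vmul K x a else x w].
  have erase_z : [ffun w => if w \in [set a; b] then 0 else z w] = x.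
    apply/ffunP => w; rewrite !ffunE !inE.
    by case: (w =P a) => [->|_]; [|case: (w =P b) => [->|]] => //=.
  suff z0 : z = 0 by rewrite -erase_z z0; apply/ffunP => w; rewrite !ffunE; case: ifP.
  apply: kerK4 => w; case: ifPn => wU.
    rewrite vmul_delta_rows // erase_z [z a]ffunE [z b]ffunE (negPf neq_ba) !eqxx.
    case: (w =P a) => [->|/eqP wa]; first by rewrite (negPf neq_ab) mulr0 mulr1 add0r addNr.
    case: (w =P b) => [->|/eqP wb]; first by rewrite mulr1 mulr0 addr0 addNr.
    by rewrite !mulr0 !add0r; have := xU w; rewrite inUab wa wb wU.
  rewrite ffunE; case: (w =P a) wU => [-> | _]; first by rewrite aU.
  case: (w =P b) => [-> | _]; first by rewrite bU.
  by move=> wU; have := xU w; rewrite inUab (negPf wU) !andbF.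
have erase0 : [ffun w => if w \in [set a; b] then 0 else x w] = 0.
  apply: kerK => w; rewrite inUab; case: and3P => [[wa wb wU] | not_in].
    by have := xU w; rewrite wU vmul_delta_rows // (negPf wa) (negPf wb) !mulr0 !add0r.
  rewrite !ffunE !inE; case: (w =P a) => [//|/eqP wa]; case: (w =P b) => [//|/eqP wb] /=.
  by have := xU w; case: ifP => // wU; case: not_in.
have [xa xb] : x a = 0 /\ x b = 0.
  split; [have := xU b | have := xU a]; rewrite ?(aU, bU) vmul_delta_rows // erase0.
    by rewrite eqxx (negPf neq_ba) vmul0 ffunE mulr1 mulr0 !addr0.
  by rewrite eqxx (negPf neq_ab) vmul0 ffunE mulr1 mulr0 add0r addr0.
apply/ffunP => w; move/ffunP/(_ w): erase0; rewrite !ffunE !inE.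
by case: (w =P a) => [->|_] //; case: (w =P b) => [->|_].
Qed.

End Nondegeneracy.

Lemma F2_cases (c : 'F_2) : c = 0 \/ c = 1.
Proof. by case: c => [[|[|n]] //= lt_n2]; [left | right]; apply: val_inj. Qed.

Lemma F2_addrr (c : 'F_2) : c + c = 0.
Proof. exact/addrr_pchar2/pchar_Fp. Qed.

Lemma F2_ffun_oppr (T : finType) (x : {ffun T -> 'F_2}) : - x = x.
Proof. by apply/ffunP => t; rewrite ffunE (oppr_pchar2 (pchar_Fp _)). Qed.

Lemma F2_addr_eq0 (c d : 'F_2) : (c + d == 0) = (c == d).
Proof. by rewrite addr_eq0 (oppr_pchar2 (pchar_Fp _)). Qed.

Lemma F2_natr_eq1 (c : 'F_2) : (c == 1)%:R = c.
Proof. by case: (F2_cases c) => ->; rewrite ?eqxx // (negPf (@oner_neq0 _)). Qed.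

Lemma F2_addr_neq0 (d e : 'F_2) : (d + e != 0) = (d != 0) (+) (e != 0).
Proof.
by case: (F2_cases d) => ->; case: (F2_cases e) => ->;
  rewrite ?addr0 ?add0r ?F2_addrr ?eqxx ?oner_eq0.
Qed.

Section Toggle.
Variables (V : finType) (K : V -> V -> 'F_2) (a b : V).
Hypotheses (K_sym : forall z w, K z w = K w z) (neq_ab : a != b).

Definition toggle : V -> V -> 'F_2 :=
  fun w u => K w u + (((w == a) && (u == b)) || ((w == b) && (u == a)))%:R.

Lemma toggle_sym z w : toggle z w = toggle w z.
Proof. by rewrite /toggle K_sym orbC andbC [(w == b) && _]andbC. Qed.

Lemma det_psubmx_toggle (U : {set V}) : a \in U -> b \in U ->
  \det (psubmx toggle U) =
  \det (psubmx K U) + \det (psubmx (delta_row (delta_row K a b) b a) U).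
Proof.
move=> aU bU; have neq_ba : b != a by rewrite eq_sym.
pose Kb w u := K w u + ((w == b) && (u == a))%:R.
have -> : \det (psubmx toggle U) =
          \det (psubmx Kb U) + \det (psubmx (delta_row Kb a b) U).
  apply: det_psubmx_rowD aU _ _ _ => [u | w u wa | w u wa];
    by rewrite /toggle /Kb /delta_row ?eqxx ?(negPf neq_ab) ?(negPf wa) /= ?orbF ?addr0.
have -> : \det (psubmx Kb U) = \det (psubmx K U) + \det (psubmx (delta_row K b a) U).
  apply: det_psubmx_rowD bU _ _ _ => [u | w u wb | w u wb];
    by rewrite /Kb /delta_row ?eqxx ?(negPf wb) ?addr0.
have -> : \det (psubmx (delta_row Kb a b) U) =
          \det (psubmx (delta_row K a b) U) +
          \det (psubmx (delta_row (delta_row K a b) b a) U).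
  apply: det_psubmx_rowD bU _ _ _ => [u | w u wb | w u wb];
    by rewrite /Kb /delta_row ?eqxx ?(negPf neq_ba) ?(negPf wb) ?addr0.
have -> : \det (psubmx (delta_row K b a) U) = \det (psubmx (delta_row K a b) U).
  have psubmx_tr : (psubmx K U)^T = psubmx K U.
    by apply/matrixP => i j; rewrite !mxE K_sym.
  by rewrite (det_psubmx_delta_row _ bU aU) -[psubmx K U]psubmx_tr cofactor_tr
             (det_psubmx_delta_row _ aU bU).
by rewrite -addrA (addrA (\det (psubmx (delta_row K a b) U))) F2_addrr add0r.
Qed.

Lemma psubmx_toggle_out (U : {set V}) : (a \notin U) || (b \notin U) ->
  psubmx toggle U = psubmx K U.
Proof.
have enum_val_out c (i : 'I_#|U|) : c \notin U -> (enum_val i == c) = false.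
  by move=> cU; apply: contraNF cU => /eqP <-; rewrite enum_valP.
case/orP => cU; apply/matrixP => i j; rewrite !mxE /toggle;
  by rewrite !(enum_val_out _ _ cU) ?andbF /= addr0.
Qed.

Lemma mem_nondeg_toggle U :
  (U \in nondeg toggle) =
  (U \in nondeg K) (+) [&& a \in U, b \in U & U :\: [set a; b] \in nondeg K].
Proof.
have [/andP[aU bU] | abU] := boolP ((a \in U) && (b \in U)).
  rewrite aU bU -nondeg_delta_rows // [LHS]mem_nondeg det_psubmx_toggle // F2_addr_neq0.
  by congr (_ (+) _); rewrite mem_nondeg.
rewrite andbA (negPf abU) addbF [LHS]mem_nondeg [RHS]mem_nondeg psubmx_toggle_out //.
by rewrite -negb_and.
Qed.

Lemma nondeg_toggle : nondeg toggle = exchange_ends (nondeg K) a b.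
Proof. by apply/setP => U; rewrite [RHS]mem_exchange_ends // [LHS]mem_nondeg_toggle. Qed.

End Toggle.

Lemma F2_ffun_decomp (T : finType) (x : {ffun T -> 'F_2}) :
  x = \sum_(z | x z == 1) [ffun t => (t == z)%:R].
Proof.
apply/ffunP => t; rewrite sum_ffunE big_mkcond /= (bigD1 t) //= big1 => [|z zt].
  by rewrite ffunE eqxx addr0 -{1}(F2_natr_eq1 (x t)); case: (x t == 1).
by case: ifP => // _; rewrite ffunE eq_sym (negPf zt).
Qed.

Section Pivot.
Variables (V : finType) (K : V -> V -> 'F_2) (S : {set V}).
Hypotheses (K_sym : forall z w, K z w = K w z) (kerS : ker_trivial K S).
Implicit Types (x y : {ffun V -> 'F_2}) (U : {set V}).

(* For y = xK, [pivot_in x] and [pivot_out x] are (x, y) with their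
   S-coordinates exchanged; the principal pivot transform of K on S is the
   matrix of the map sending the first to the second. *)
Definition pivot_in x : {ffun V -> 'F_2} :=
  [ffun w => if w \in S then vmul K x w else x w].
Definition pivot_out x : {ffun V -> 'F_2} :=
  [ffun w => if w \in S then x w else vmul K x w].

Lemma pivot_inD x y : pivot_in (x + y) = pivot_in x + pivot_in y.
Proof. by apply/ffunP => w; rewrite ffunE (vmulD K x y) !ffunE; case: ifP. Qed.

Lemma pivot_outD x y : pivot_out (x + y) = pivot_out x + pivot_out y.
Proof. by apply/ffunP => w; rewrite ffunE (vmulD K x y) !ffunE; case: ifP. Qed.

Lemma pivot_in0 : pivot_in 0 = 0.
Proof. by apply/ffunP => w; rewrite ffunE (vmul0 K) ffunE; case: ifP. Qed.

Lemma pivot_inout_symdiff U x w :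
  (if w \in U then pivot_out x else pivot_in x) w =
  (if w \in symdiff U S then vmul K x else x) w.
Proof. by rewrite in_symdiff; case: (w \in U); rewrite ffunE; case: (w \in S). Qed.

Lemma pivot_in_eq0 x : pivot_in x = 0 -> x = 0.
Proof.
move=> x0; apply: kerS => w; move/ffunP/(_ w): x0.
by rewrite !ffunE; case: (w \in S); rewrite ?ffunE.
Qed.

Lemma pivot_in_inj : injective pivot_in.
Proof.
move=> x y exy; apply/eqP; rewrite -[y]F2_ffun_oppr -addr_eq0; apply/eqP.
by apply: pivot_in_eq0; rewrite pivot_inD exy -{1}[pivot_in y]F2_ffun_oppr addNr.
Qed.

Definition pivot_map x := pivot_out (invF pivot_in_inj x).

Definition pivot_mx (z w : V) : 'F_2 := pivot_map [ffun t => (t == z)%:R] w.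

Lemma pivot_map_in x : pivot_map (pivot_in x) = pivot_out x.
Proof. by rewrite /pivot_map invF_f. Qed.

Lemma pivot_mapD x y : pivot_map (x + y) = pivot_map x + pivot_map y.
Proof.
rewrite -(f_invF pivot_in_inj x) -(f_invF pivot_in_inj y) -pivot_inD.
by rewrite !pivot_map_in pivot_outD.
Qed.

Lemma pivot_map0 : pivot_map 0 = 0.
Proof. by apply: (addrI (pivot_map 0)); rewrite -pivot_mapD !addr0. Qed.

Lemma pivot_map_vmul x : pivot_map x = vmul pivot_mx x.
Proof.
rewrite {1}(F2_ffun_decomp x) (big_morph pivot_map pivot_mapD pivot_map0).
apply/ffunP => w; rewrite sum_ffunE ffunE big_mkcond; apply: eq_bigr => z _.
by case: (F2_cases (x z)) => ->; rewrite ?eqxx ?mul1r // eq_sym oner_eq0 mul0r.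
Qed.

Lemma pivot_map_sym x y :
  \sum_w x w * pivot_map y w = \sum_w y w * pivot_map x w.
Proof.
rewrite -(f_invF pivot_in_inj x) -(f_invF pivot_in_inj y) !pivot_map_in.
move: (invF _ x) (invF _ y) => {}x {}y; apply/eqP.
rewrite -F2_addr_eq0 -big_split /=; apply/eqP.
transitivity (\sum_w (x w * vmul K y w + y w * vmul K x w)).
  apply: eq_bigr => w _; rewrite !ffunE.
  by case: (w \in S); rewrite // addrC [_ * x w]mulrC [_ * y w]mulrC.
by rewrite big_split /= (vmul_sym _ _ K_sym) F2_addrr.
Qed.

Lemma pivot_mx_sym z w : pivot_mx z w = pivot_mx w z.
Proof.
have delta_sum u (f : {ffun V -> 'F_2}) : \sum_t [ffun t => (t == u)%:R] t * f t = f u.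
  rewrite (bigD1 u) //= big1 => [|t tu]; first by rewrite ffunE eqxx mul1r addr0.
  by rewrite ffunE (negPf tu) mul0r.
by rewrite /pivot_mx -[LHS]delta_sum pivot_map_sym delta_sum.
Qed.

Lemma ker_trivial_pivot U : ker_trivial pivot_mx U <-> ker_trivial K (symdiff U S).
Proof.
have null_on_pivot x :
    null_on U (pivot_in x) (vmul pivot_mx (pivot_in x)) <-> null_on (symdiff U S) x (vmul K x).
  by rewrite -pivot_map_vmul pivot_map_in; split=> xn w; have := xn w; rewrite pivot_inout_symdiff.
split=> [kerL x /null_on_pivot/kerL xn | kerK x'].
  by apply: pivot_in_inj; rewrite xn pivot_in0.
by rewrite -(f_invF pivot_in_inj x') => /null_on_pivot/kerK ->; rewrite pivot_in0.
Qed.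

End Pivot.

Lemma nondeg_pivot (V : finType) (K : V -> V -> 'F_2) (S : {set V}) :
  (forall z w, K z w = K w z) -> S \in nondeg K ->
  exists L : V -> V -> 'F_2,
    (forall z w, L z w = L w z) /\ nondeg L = twist (nondeg K) S.
Proof.
move=> K_sym /nondegP kerS; exists (pivot_mx kerS); split.
  exact: pivot_mx_sym.
apply/setP => U; rewrite mem_twist.
by apply/nondegP/nondegP => /(ker_trivial_pivot kerS).
Qed.

Definition framed_mx (V : finType) (adj : rel V) (fr : V -> bool) : V -> V -> 'F_2 :=
  fun x y => if x == y then (fr x)%:R else (adj x y)%:R.

Lemma nondeg_feasibleE (V : finType) (adj : rel V) (fr : V -> bool) :
  nondeg_feasible adj fr = nondeg (framed_mx adj fr).
Proof. by []. Qed.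

Lemma binary_dmP (E : finType) (Phi : {set {set E}}) :
  binary_dm Phi <->
  exists (V : finType) (K : V -> V -> 'F_2) (X : {set V}) (g : V -> E),
    [/\ forall z w, K z w = K w z, bijective g & Phi = relabel g (twist (nondeg K) X)].
Proof.
split=> [[V [adj [fr [X [g [adj_sym _ bij_g PhiE]]]]]] | [V [K [X [g [K_sym bij_g PhiE]]]]]].
  exists V, (framed_mx adj fr), X, g; split; [|exact: bij_g|by rewrite PhiE nondeg_feasibleE].
  by move=> z w; rewrite /framed_mx eq_sym adj_sym; case: eqP => [->|].
exists V, (fun x y => (x != y) && (K x y == 1)), (fun x => K x x == 1), X, g; split.
- by move=> x y; rewrite eq_sym K_sym.
- by move=> x; rewrite eqxx.
- exact: bij_g.
rewrite PhiE nondeg_feasibleE (@nondeg_ext _ _ _ K) // => x y.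
by rewrite /framed_mx; case: eqP => [->|_]; rewrite F2_natr_eq1.
Qed.

Lemma binary_dm_twist (E : finType) (Phi : {set {set E}}) (Y : {set E}) :
  binary_dm Phi -> binary_dm (twist Phi Y).
Proof.
case/binary_dmP => V [K [X [g [K_sym [h gK hK] ->]]]].
apply/binary_dmP; exists V, K, (symdiff (h @: Y) X), g; split => //; first by exists h.
by rewrite (twist_relabel gK hK) twist_twist.
Qed.

Lemma binary_dm_exchange_ends_set0 (E : finType) (Phi : {set {set E}}) (a b : E) :
  a != b -> binary_dm Phi -> set0 \in Phi -> binary_dm (exchange_ends Phi a b).
Proof.
move=> neq_ab /binary_dmP [V [K [X [g [K_sym [h gK hK] ->]]]]].
rewrite (mem_relabel gK hK) imset0 mem_twist_set0 => /(nondeg_pivot K_sym) [L [L_sym <-]].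
apply/binary_dmP; exists V, (toggle L (h a) (h b)), set0, g; split.
- exact: toggle_sym.
- by exists h.
rewrite twist_set0 nondeg_toggle ?(can_eq hK) // -{1}(hK a) -{1}(hK b).
by rewrite (exchange_ends_relabel gK hK) // (can_eq hK).
Qed.

Theorem proposition4p4 (E : finType) (Phi : {set {set E}}) (a b : E) :
  a != b -> binary_dm Phi -> binary_dm (exchange_ends Phi a b).
Proof.
move=> neq_ab binPhi.
case: (pickP [pred psi | [&& psi \in Phi, a \notin psi & b \notin psi]]) =>
    [psi /and3P[Phi_psi a_psi b_psi] | Phi_meets_ab].
  rewrite -(twistK psi Phi) exchange_ends_twist //.
  apply/binary_dm_twist/binary_dm_exchange_ends_set0 => //.
    exact: binary_dm_twist.
  by rewrite mem_twist_set0.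
rewrite exchange_ends_id // => S PhiS.
by move: (Phi_meets_ab S); rewrite /= PhiS; case: (a \in S); case: (b \in S).
Qed.
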